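(* Let $G$ be a finite connected graph, viewed as an electrical network with unit resistance on each edge, and let $x,y$ be vertices of $G$. Then for every $\varepsilon>0$, $$\mathbb{P}_x\big(\tau_y\leq \varepsilon\, (R_{\mathrm{eff}}(x\leftrightarrow y))^2\big)\leq \varepsilon,$$ where $(X_t)$ is simple random walk on $G$ started at $x$.
   Context: $\tau_y=\min\{t\geq 1:X_t=y\}$. $R_{\mathrm{eff}}(x\leftrightarrow y)$ is the effective resistance between $x$ and $y$ in the network with unit edge resistances. *)

From HB Require Import structures.
From mathcomp Require Import all_boot all_order all_algebra.
From Stdlib Require Import ClassicalEpsilon.
Set Implicit Arguments. Unset Strict Implicit. Unset Printing Implicit Defensive.
Import Order.TTheory GRing.Theory Num.Theory.
Local Open Scope ring_scope.

Definition deg (T : finType) (e : rel T) (v : T) : nat := #|[set w | e v w]|.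

Definition srw_step (R : realFieldType) (T : finType) (e : rel T) (v w : T) : R :=
  (e v w)%:R / (deg e v)%:R.

(* hit_within e y n v = P_v( tau_y <= n ), tau_y = min { t >= 1 : X_t = y },
   for simple random walk (X_t) started at v. *)
Fixpoint hit_within (R : realFieldType) (T : finType) (e : rel T) (y : T)
    (n : nat) (v : T) : R :=
  match n with
  | 0 => 0
  | n'.+1 => \sum_(w : T) srw_step R e v w *
                (if w == y then 1 else hit_within R e y n' w)
  end.

(* Unit-current voltage from x to y in the network with unit resistances:
   voltage grounded at y (v y = 0), harmonic (Kirchhoff's node law) at every
   vertex other than x,y, and unit current flowing out of x. *)
Definition unit_voltage (R : realFieldType) (T : finType) (e : rel T) (x y : T)
    (v : {ffun T -> R}) : Prop :=
  [/\ v y = 0,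
      forall z, z != x -> z != y -> \sum_(w | e z w) (v z - v w) = 0
    & \sum_(w | e x w) (v x - v w) = 1].

(* Effective resistance R_eff(x <-> y) = voltage at x for the unit current flow
   (the voltage exists and is unique for connected graphs); 0 when x = y. *)
Definition Reff (R : realFieldType) (T : finType) (e : rel T) (x y : T) : R :=
  if x == y then 0
  else (epsilon (inhabits [ffun _ : T => (0 : R)]) (unit_voltage e x y)) x.

From HB Require Import structures.
From mathcomp Require Import all_boot all_order all_algebra.
From mathcomp Require Import lra.
From Stdlib Require Import ClassicalEpsilon.
Set Implicit Arguments. Unset Strict Implicit.
Import Order.TTheory GRing.Theory Num.Theory.
Local Open Scope ring_scope.

(* Let v be the unit-current voltage from x to y, so that Reff = v x.  The
   voltage drops by at most 1 across any edge, since the current through one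
   edge is at most the total unit current; and v is harmonic off {x, y}.  Hence
   (v x - v X_t)^2 - t is a supermartingale for the walk stopped at y, and it
   equals v x^2 once y is hit, which gives v x^2 P_x(tau_y <= n) <= n. *)

Section Network.

Variables (R : realFieldType) (T : finType) (e : rel T).
Hypothesis e_sym : symmetric e.

Definition laplacian (v : T -> R) (z : T) : R := \sum_(w | e z w) (v z - v w).

Lemma deg_sum z (c : R) : \sum_(w | e z w) c = (deg e z)%:R * c.
Proof. by rewrite sumr_const mulr_natl /deg cardsE. Qed.

Lemma sum_edges_in_swap (S : {set T}) (F : T -> T -> R) :
  \sum_(z in S) \sum_(w | (w \in S) && e z w) F z w =
  \sum_(z in S) \sum_(w | (w \in S) && e z w) F w z.
Proof.
rewrite (exchange_big_dep (fun w => w \in S)) /=; last by move=> i j _ /andP[].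
by apply: eq_bigr => w wS; apply: eq_bigl => z; rewrite wS e_sym.
Qed.

Lemma sum_edges_in_antisym (S : {set T}) (v : T -> R) :
  \sum_(z in S) \sum_(w | (w \in S) && e z w) (v z - v w) = 0.
Proof.
set X := (X in X = 0).
suff: X *+ 2 = 0 by move/eqP; rewrite mulrn_eq0 => /eqP.
rewrite mulr2n {2}/X sum_edges_in_swap -big_split big1 // => z _.
by rewrite -big_split big1 // => w _ /=; rewrite addrC addrA subrK subrr.
Qed.

Lemma sum_laplacian (v : T -> R) : \sum_z laplacian v z = 0.
Proof.
rewrite -[RHS](sum_edges_in_antisym setT v).
by apply: eq_big => [z|z _]; rewrite ?in_setT //; apply: eq_bigl => w; rewrite in_setT.
Qed.

Lemma sum_laplacian_boundary (S : {set T}) (v : T -> R) :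
  \sum_(z in S) laplacian v z =
  \sum_(z in S) \sum_(w | e z w && (w \notin S)) (v z - v w).
Proof.
rewrite -[RHS]add0r -[X in X + _](sum_edges_in_antisym S v) -big_split.
apply: eq_bigr => z _.
rewrite /laplacian (bigID (fun w => w \in S)) /=; congr (_ + _).
by apply: eq_bigl => w; rewrite andbC.
Qed.

Lemma dirichlet_energy (v : T -> R) :
  \sum_z \sum_(w | e z w) (v z - v w) ^+ 2 = (\sum_z v z * laplacian v z) *+ 2.
Proof.
have -> : \sum_z \sum_(w | e z w) (v z - v w) ^+ 2 =
    \sum_z \sum_(w | e z w) (v z * (v z - v w) + v w * (v w - v z)).
  apply: eq_bigr => z _; apply: eq_bigr => w _.
  by rewrite expr2 mulrBl -mulrN opprB.
rewrite mulr2n; under eq_bigr do rewrite big_split.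
rewrite big_split /=; congr (_ + _).
  by apply: eq_bigr => z _; rewrite /laplacian mulr_sumr.
rewrite (exchange_big_dep xpredT) //=; apply: eq_bigr => z _.
by rewrite /laplacian mulr_sumr; apply: eq_bigl => w; rewrite e_sym.
Qed.

Hypothesis e_conn : forall u w : T, connect e u w.

Lemma harmonic_eq0 (y : T) (v : T -> R) :
  v y = 0 -> (forall z, z != y -> laplacian v z = 0) -> forall z, v z = 0.
Proof.
move=> vy harm.
have energy0 : \sum_z \sum_(w | e z w) (v z - v w) ^+ 2 = 0.
  rewrite dirichlet_energy big1 ?mul0rn // => z _.
  by case: (eqVneq z y) => [->|/harm->]; rewrite ?vy ?mul0r ?mulr0.
have v_edge z w : e z w -> v z = v w.
  move=> ezw; apply/eqP; rewrite -subr_eq0 -sqrf_eq0; apply/eqP.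
  have /psumr_eq0P energy_z := energy0.
  have /psumr_eq0P := energy_z (fun i _ => sumr_ge0 _ (fun j _ => sqr_ge0 _)) z isT.
  by apply=> // j _; exact: sqr_ge0.
have v0_closed : closed e [pred u | v u == 0].
  by move=> a b /v_edge vab; rewrite !inE vab.
move=> z; have := closed_connect v0_closed (e_conn z y).
by rewrite !inE vy eqxx => /eqP.
Qed.

Lemma dirichlet_solvable (y : T) (f : T -> R) :
  exists v : {ffun T -> R}, v y = 0 /\ forall z, z != y -> laplacian v z = f z.
Proof.
(* Phi is injective by [harmonic_eq0], hence onto. *)
pose Phi (v : {ffun T -> R^o}) : {ffun T -> R^o} :=
  [ffun z => if z == y then v y else laplacian v z].
have Phi_linear : linear Phi.
  move=> k u w; apply/ffunP => z; rewrite !ffunE; case: ifP => // _.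
  rewrite /laplacian scaler_sumr -big_split; apply: eq_bigr => t _ /=.
  by rewrite !ffunE scalerBr opprD addrACA.
pose PhiL : {linear {ffun T -> R^o} -> {ffun T -> R^o}} :=
  HB.pack Phi (GRing.isLinear.Build _ _ _ _ Phi Phi_linear).
have Phi_inj : lker (linfun PhiL) == 0%VS.
  apply/lker0P => u w; rewrite !lfunE /= => Phi_uw.
  apply/ffunP => z; apply/eqP; rewrite -subr_eq0; apply/eqP.
  have Phi_uw_at t := congr1 (fun F : {ffun T -> R^o} => F t) Phi_uw.
  apply: (@harmonic_eq0 y (fun t => u t - w t) _ _ z) => [|t nty].
    by have := Phi_uw_at y; rewrite /= !ffunE eqxx => ->; rewrite subrr.
  have := Phi_uw_at t; rewrite /= !ffunE (negbTE nty) /laplacian => lap_uw.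
  rewrite -[RHS](subrr (\sum_(s | e t s) (w t - w s))) -{1}lap_uw -sumrB.
  by apply: eq_bigr => s _; rewrite !opprB addrACA [RHS]addrACA [- w t + _]addrC.
pose f' : {ffun T -> R^o} := [ffun z => if z == y then 0 else f z].
have := lker0_lfunVK Phi_inj f'; rewrite lfunE /=.
set v := ((linfun PhiL)^-1)%VF f' => Phi_v_f.
have Phi_v z : (if z == y then v y else laplacian v z) = if z == y then 0 else f z.
  by have := congr1 (fun F : {ffun T -> R^o} => F z) Phi_v_f; rewrite /= !ffunE.
exists v; split => [|z nzy]; first by have := Phi_v y; rewrite eqxx.
by have := Phi_v z; rewrite (negbTE nzy).
Qed.

Section UnitVoltage.

Variables (x y : T) (v : {ffun T -> R}).
Hypothesis hv : unit_voltage e x y v.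

Lemma voltage_laplacian z : laplacian v z = (z == x)%:R - (z == y)%:R.
Proof.
case: hv => _ harm out1.
have off_y t : t != y -> laplacian v t = (t == x)%:R.
  by move=> nty; case: (eqVneq t x) => [->|ntx]; [exact: out1 | exact: harm].
case: (eqVneq z y) => [->|nzy]; last by rewrite off_y // subr0.
have := sum_laplacian v; rewrite (bigD1 y) //= => /eqP; rewrite addr_eq0 => /eqP->.
rewrite (eq_bigr (fun t => (t == x)%:R)) => [|t /off_y //].
case: (eqVneq x y) => [<-|nxy].
  by rewrite big1 => [|t /negbTE->//]; rewrite subrr oppr0.
rewrite (bigD1 x) //= eqxx big1 => [|t /andP[_ /negbTE->]//].
by rewrite addr0 sub0r.
Qed.

Lemma sum_laplacian_voltage_le1 (S : {set T}) : \sum_(z in S) laplacian v z <= 1.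
Proof.
under eq_bigr do rewrite voltage_laplacian.
have sum_x : \sum_(z in S) ((z == x)%:R : R) <= 1.
  rewrite big_mkcond (bigD1 x) //= big1 => [|z /negbTE->]; last by case: ifP.
  by rewrite eqxx addr0; case: ifP.
have sum_y : 0 <= \sum_(z in S) ((z == y)%:R : R) by apply: sumr_ge0 => z _.
by rewrite sumrB; lra.
Qed.

Lemma voltage_edge_le1 a b : e a b -> v a - v b <= 1.
Proof.
move=> eab; case: (leP (v a) (v b)) => [vab|vba]; first by lra.
(* [v a - v b] is one term of the current leaving the superlevel set of [v a]. *)
pose S := [set z | v a <= v z].
apply: le_trans (sum_laplacian_voltage_le1 S); rewrite sum_laplacian_boundary.
have aS : a \in S by rewrite inE.
have bS : b \notin S by rewrite inE -ltNge.
have cross_ge0 z w : z \in S -> w \notin S -> 0 <= v z - v w.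
  by rewrite !inE -ltNge subr_ge0 => vz vw; exact: ltW (lt_le_trans vw vz).
rewrite (bigD1 a) //= (bigD1 b) /=; last by rewrite eab bS.
rewrite -addrA lerDl addr_ge0 //.
  by apply: sumr_ge0 => w /andP[/andP[_ wS] _]; exact: cross_ge0.
by apply: sumr_ge0 => z /andP[zS _]; apply: sumr_ge0 => w /andP[_ wS]; exact: cross_ge0.
Qed.

Lemma voltage_edge_sqr_le1 a b : e a b -> (v a - v b) ^+ 2 <= 1.
Proof.
move=> eab; have := voltage_edge_le1 eab.
have := voltage_edge_le1 (etrans (e_sym b a) eab).
by nra.
Qed.

Lemma sum_sqr_voltage_step z : z != y ->
  \sum_(w | e z w) (v x - v w) ^+ 2 <= (deg e z)%:R * ((v x - v z) ^+ 2 + 1).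
Proof.
move=> nzy.
have cross0 : \sum_(w | e z w) (v x - v z) * (v z - v w) = 0.
  rewrite -mulr_sumr -/(laplacian v z) voltage_laplacian (negbTE nzy) subr0.
  by case: (eqVneq z x) => [->|_]; rewrite ?subrr ?mul0r ?mulr0.
have expand w : (v x - v w) ^+ 2 =
    (v x - v z) ^+ 2 + (v x - v z) * (v z - v w) *+ 2 + (v z - v w) ^+ 2.
  by rewrite -sqrrD addrA subrK.
rewrite (eq_bigr _ (fun w _ => expand w)) !big_split /= cross0.
rewrite !addr0 deg_sum mulrDr lerD2l -deg_sum.
by apply: ler_sum => w; exact: voltage_edge_sqr_le1.
Qed.

Lemma hit_within_voltage n z : z != y ->
  v x ^+ 2 * hit_within R e y n z <= (v x - v z) ^+ 2 + n%:R.
Proof.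
have vy : v y = 0 by case: hv.
elim: n z => [|n IHn] z nzy /=; first by rewrite mulr0 addr0 sqr_ge0.
case: (posnP (deg e z)) => [deg0|deg_gt0].
  rewrite big1 ?mulr0 ?addr_ge0 ?sqr_ge0 // => w _.
  by rewrite /srw_step deg0 invr0 mulr0 mul0r.
have next_le w : v x ^+ 2 * (if w == y then 1 else hit_within R e y n w) <=
    (v x - v w) ^+ 2 + n%:R.
  by case: (eqVneq w y) => [->|/IHn //]; rewrite vy subr0 mulr1 lerDl.
rewrite mulr_sumr.
apply: le_trans (_ : \sum_w srw_step R e z w * ((v x - v w) ^+ 2 + n%:R) <= _).
  by apply: ler_sum => w _; rewrite mulrCA ler_wpM2l // divr_ge0.
have -> : \sum_w srw_step R e z w * ((v x - v w) ^+ 2 + n%:R) =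
    (deg e z)%:R^-1 * \sum_(w | e z w) ((v x - v w) ^+ 2 + n%:R).
  rewrite mulr_sumr [RHS]big_mkcond; apply: eq_bigr => w _ /=; rewrite /srw_step.
  by case: (e z w); rewrite ?mul0r ?mulr0 // mul1r.
rewrite ler_pdivrMl ?ltr0n // big_split /= deg_sum -natr1.
by have := sum_sqr_voltage_step nzy; lra.
Qed.

End UnitVoltage.

Lemma Reff_voltage x y : x != y ->
  exists v, unit_voltage e x y v /\ Reff R e x y = v x.
Proof.
move=> nxy; rewrite /Reff (negbTE nxy).
set v := epsilon _ _; exists v; split => //; apply: epsilon_spec.
have [u [uy lap_u]] := dirichlet_solvable y (fun z => (z == x)%:R).
exists u; split => // [z nzx nzy|]; first by have := lap_u z nzy; rewrite (negbTE nzx).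
by have := lap_u x nxy; rewrite eqxx.
Qed.

End Network.

Theorem lemma2p1 (R : realFieldType) (T : finType) (e : rel T)
  (e_sym : symmetric e) (e_irr : irreflexive e)
  (e_conn : forall u v : T, connect e u v)
  (x y : T) (eps : R) (eps_gt0 : 0 < eps) (n : nat)
  (hn : n%:R <= eps * Reff R e x y ^+ 2) :
  hit_within R e y n x <= eps.
Proof.
case: (eqVneq (Reff R e x y) 0) => [Reff0|Reff_neq0].
  move: hn; rewrite Reff0 expr0n mulr0 lern0 => /eqP->.
  exact: ltW.
have nxy : x != y by apply: contraNneq Reff_neq0 => ->; rewrite /Reff eqxx.
have [v [hv Reff_v]] := Reff_voltage R e_sym e_conn nxy.
have := hit_within_voltage e_sym hv n nxy; rewrite subrr expr0n add0r => hit_le.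
have vx2_gt0 : 0 < v x ^+ 2 by rewrite exprn_even_gt0 // -Reff_v.
rewrite -(ler_pM2l vx2_gt0); apply: le_trans hit_le _.
by rewrite mulrC -Reff_v.
Qed.
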